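(* Let $V$ be a real inner product space with induced norm $\lVert\cdot\rVert$. Let $a,b,a',b'\in V$ and $\gamma\ge0$ satisfy \[ \max\{\lVert x-y\rVert : x,y\in\{a,b,a',b'\}\}\le\gamma\le 2\lVert a-b\rVert+2\lVert a'-b'\rVert . \] Then, with $m=(a+b)/2$ and $m'=(a'+b')/2$, we have $\lVert m-m'\rVert\le\sqrt{\tfrac{31}{32}}\,\gamma$. *)

From HB Require Import structures.
From mathcomp Require Import all_boot all_order all_algebra.
From mathcomp Require Import reals.
Set Implicit Arguments. Unset Strict Implicit. Unset Printing Implicit Defensive.
Import Order.TTheory GRing.Theory Num.Theory.
Local Open Scope ring_scope.

Record inner_product (R : realType) (V : lmodType R) := InnerProduct {
  ip :> V -> V -> R;
  ipC : forall x y, ip x y = ip y x;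
  ipDl : forall x y z, ip (x + y) z = ip x z + ip y z;
  ipZl : forall (c : R) x y, ip (c *: x) y = c * ip x y;
  ip_ge0 : forall x, 0 <= ip x x;
  ip_eq0 : forall x, ip x x = 0 -> x = 0
}.

Definition ipnorm (R : realType) (V : lmodType R) (f : inner_product V) (x : V) : R :=
  Num.sqrt (f x x).

(** Expanding the inner products gives the quadrilateral identity
    [4 |m - m'|^2 + |a - b|^2 + |a' - b'|^2 = |a - a'|^2 + |a - b'|^2 + |b - a'|^2 + |b - b'|^2].
    The right-hand side is at most [4 gamma^2], while the lower bound on [gamma]
    gives [|a - b|^2 + |a' - b'|^2 >= gamma^2 / 8], hence [|m - m'|^2 <= 31/32 gamma^2]. *)

From HB Require Import structures.
From mathcomp Require Import all_boot all_order all_algebra.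
From mathcomp Require Import reals.
From mathcomp Require Import ring lra.
Import Order.TTheory GRing.Theory Num.Theory.
Local Open Scope ring_scope.

Section InnerProductTheory.
Variables (R : realType) (V : lmodType R) (f : inner_product V).

Lemma ipDr x y z : f x (y + z) = f x y + f x z.
Proof. by rewrite ipC ipDl ipC [f z x]ipC. Qed.

Lemma ipZr c x y : f x (c *: y) = c * f x y.
Proof. by rewrite ipC ipZl ipC. Qed.

Lemma ipNl x y : f (- x) y = - f x y.
Proof. by rewrite -scaleN1r ipZl mulN1r. Qed.

Lemma ipNr x y : f x (- y) = - f x y.
Proof. by rewrite ipC ipNl ipC. Qed.

Lemma ipnorm_ge0 x : 0 <= ipnorm f x.
Proof. exact: sqrtr_ge0. Qed.

Lemma sqr_ipnorm x : ipnorm f x ^+ 2 = f x x.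
Proof. by rewrite /ipnorm sqr_sqrtr // ip_ge0. Qed.

Lemma quadrilateral_midpoint_identity a b a' b' :
  4 * ipnorm f (2^-1 *: (a + b) - 2^-1 *: (a' + b')) ^+ 2
    + ipnorm f (a - b) ^+ 2 + ipnorm f (a' - b') ^+ 2
  = ipnorm f (a - a') ^+ 2 + ipnorm f (a - b') ^+ 2
    + ipnorm f (b - a') ^+ 2 + ipnorm f (b - b') ^+ 2.
Proof.
rewrite !sqr_ipnorm !(ipDl, ipNl, ipZl, ipDr, ipNr, ipZr).
rewrite [f b a]ipC [f a' a]ipC [f b' a]ipC [f a' b]ipC [f b' b]ipC [f b' a']ipC.
by field.
Qed.

End InnerProductTheory.

Lemma sqrD_le2 {R : realFieldType} (x y : R) :
  (x + y) ^+ 2 <= 2 * (x ^+ 2 + y ^+ 2).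
Proof.
rewrite -subr_ge0.
have -> : 2 * (x ^+ 2 + y ^+ 2) - (x + y) ^+ 2 = (x - y) ^+ 2 by ring.
exact: sqr_ge0.
Qed.

Lemma ler_sqrtM_of_sqr {R : rcfType} (c x g : R) :
  0 <= c -> 0 <= x -> 0 <= g -> x ^+ 2 <= c * g ^+ 2 -> x <= Num.sqrt c * g.
Proof.
move=> c0 x0 g0 le_sqr.
rewrite -[x](ger0_norm x0) -[g](ger0_norm g0) -!sqrtr_sqr -sqrtrM //.
by rewrite ler_sqrt // mulr_ge0 ?sqr_ge0.
Qed.

Theorem lemma3 (R : realType) (V : lmodType R) (ip : inner_product V)
    (a b a' b' : V) (gamma : R) :
  0 <= gamma ->
  (forall x y, x \in [:: a; b; a'; b'] -> y \in [:: a; b; a'; b'] ->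
     ipnorm ip (x - y) <= gamma) ->
  gamma <= 2 * ipnorm ip (a - b) + 2 * ipnorm ip (a' - b') ->
  let m := 2^-1 *: (a + b) in
  let m' := 2^-1 *: (a' + b') in
  ipnorm ip (m - m') <= Num.sqrt (31 / 32) * gamma.
Proof.
move=> gamma0 diam_le gamma_le /=.
have cross x y : x \in [:: a; b; a'; b'] -> y \in [:: a; b; a'; b'] ->
    ipnorm ip (x - y) ^+ 2 <= gamma ^+ 2.
  by move=> xs ys; rewrite lerXn2r ?nnegrE ?ipnorm_ge0 ?diam_le.
have mem_a : a \in [:: a; b; a'; b'] by rewrite !inE eqxx.
have mem_b : b \in [:: a; b; a'; b'] by rewrite !inE eqxx ?orbT.
have mem_a' : a' \in [:: a; b; a'; b'] by rewrite !inE eqxx ?orbT.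
have mem_b' : b' \in [:: a; b; a'; b'] by rewrite !inE eqxx ?orbT.
have sides_ge : gamma ^+ 2 <= 8 * (ipnorm ip (a - b) ^+ 2 + ipnorm ip (a' - b') ^+ 2).
  have := sqrD_le2 (ipnorm ip (a - b)) (ipnorm ip (a' - b')).
  have : gamma ^+ 2 <= (2 * ipnorm ip (a - b) + 2 * ipnorm ip (a' - b')) ^+ 2.
    by rewrite lerXn2r ?nnegrE // addr_ge0 ?mulr_ge0 ?ipnorm_ge0.
  rewrite -mulrDr exprMn; lra.
apply: ler_sqrtM_of_sqr; [lra | exact: ipnorm_ge0 | done |].
have := quadrilateral_midpoint_identity _ _ ip a b a' b'.
have := cross _ _ mem_a mem_a'; have := cross _ _ mem_a mem_b'.
have := cross _ _ mem_b mem_a'; have := cross _ _ mem_b mem_b'.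
lra.
Qed.
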